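(* There exist $p\in\mathcal P$ and $x\in N$ such that $D_{\mu(p)}(p)=\{x\}\subseteq D_{\mu(p^r)}(p^r)$ if and only if $(h,n)\notin T_2$, where $T_2=\{(h,n): h=2\}\cup\{(h,n): n\le3\}\cup\{(4,4)\}$.
   Context: Let $n,h\ge2$ be integers, $N=\{1,\dots,n\}$, $H=\{1,\dots,h\}$. $\mathcal P$ is the set of $h$-tuples $p=(p_1,\dots,p_h)$ of linear orders on $N$; $p^r$ is obtained by reversing each $p_i$; $x>_{p_i}y$ means $x\ne y$ and $p_i$ ranks $x$ above $y$. For an integer $\mu$ with $h/2<\mu\le h$, $D_\mu(p)=\{x\in N: \forall y\in N,\ |\{i: y>_{p_i}x\}|<\mu\}$, and $\mu(p)=\min\{\mu\in\mathbb N\cap(h/2,h]: D_\mu(p)\neq\varnothing\}$. *)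

From mathcomp Require Import all_boot.
Set Implicit Arguments. Unset Strict Implicit. Unset Printing Implicit Defensive.

(* The voter set N = {1,...,n} is modelled by 'I_n, the index set H = {1,...,h} by 'I_h.
   A linear order on 'I_n is a boolean relation r, r x y meaning
   "x is ranked at or above y". *)
Definition linear_order (n : nat) (r : rel 'I_n) : Prop :=
  [/\ reflexive r, antisymmetric r, transitive r & total r].

Definition profile (h n : nat) := 'I_h -> rel 'I_n.

Definition above (n : nat) (r : rel 'I_n) (x y : 'I_n) : bool := (x != y) && r x y.

Definition prof_rev (h n : nat) (p : profile h n) : profile h n :=
  fun i x y => p i y x.

Definition Dmu (h n : nat) (m : nat) (p : profile h n) : {set 'I_n} :=
  [set x | [forall y, #|[set i : 'I_h | above (p i) y x]| < m]].

(* mu(p) = min { m integer, h/2 < m <= h, D_m(p) nonempty }.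
   For integers, h/2 < m  <->  h./2 < m.  The candidates h./2+1, ..., h are scanned
   in increasing order; the default h is never used for linear-order profiles
   (D_h(p) contains the top of p_1). *)
Definition mu (h n : nat) (p : profile h n) : nat :=
  head h [seq m <- iota h./2.+1 (h - h./2) | Dmu m p != set0].

(* Everything depends on a profile only through its scores c y x, the number of
   voters ranking y above x; for linear orders c y x + c x y = h when y <> x, and
   c a b + c b d + c d a <= 2h.  Put mu = mu(p) and say that y beats z when
   c y z >= mu > h/2, an asymmetric relation.  If D_mu(p) = {x}, then x is unbeaten
   and every other candidate is beaten.  If moreover x is in D_mu(p^r), then either
   x beats nobody, or mu <= c x z < mu(p^r) for some z, and since D_(mu(p^r)-1)(p^r)
   is empty every candidate beats somebody.  Either way, for n <= 4 the candidates
   other than x contain a beating cycle, of length two (impossible) or, when n = 4,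
   three (which needs 3 mu <= 2h, false for h = 4).  For h = 2 we have mu = h, which
   puts x at the top of every order and hence outside D_mu(p^r).
   Conversely, explicit profiles for (h, n) = (3, 4), (4, 5) and (6, 4) extend to all
   remaining pairs: adding a voter together with the reversed voter raises every
   off-diagonal score by one, and cloning a non-winning candidate immediately below
   itself adds a candidate; both operations preserve the property. *)

From mathcomp Require Import all_boot zify.
Set Implicit Arguments. Unset Strict Implicit. Unset Printing Implicit Defensive.

Section Scores.
Variable n : nat.
Implicit Types (c : 'I_n -> 'I_n -> nat) (m : nat).

Definition undominated c m : {set 'I_n} := [set x | [forall y, c y x < m]].

Definition mu_of h c : nat :=
  head h [seq m <- iota h./2.+1 (h - h./2) | undominated c m != set0].

Definition transpose c : 'I_n -> 'I_n -> nat := fun y x => c x y.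

Definition winner h c x :=
  undominated c (mu_of h c) = [set x] /\
  x \in undominated (transpose c) (mu_of h (transpose c)).

Lemma undominatedP c m x : reflect (forall y, c y x < m) (x \in undominated c m).
Proof. by rewrite inE; apply: forallP. Qed.

Lemma dominatedP c m z :
  z \notin undominated c m -> exists y, m <= c y z.
Proof. by rewrite inE negb_forall => /existsP[y]; rewrite -leqNgt; exists y. Qed.

Lemma eq_undominated c c' m : c =2 c' -> undominated c m = undominated c' m.
Proof. by move=> E; apply/setP=> x; rewrite !inE; apply: eq_forallb => y; rewrite E. Qed.

Lemma eq_mu_of h c c' : c =2 c' -> mu_of h c = mu_of h c'.
Proof. by move=> E; rewrite /mu_of; under eq_filter => m do rewrite (eq_undominated m E). Qed.

Lemma winner_nonempty h c x : winner h c x ->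
  undominated c (mu_of h c) != set0 /\
  undominated (transpose c) (mu_of h (transpose c)) != set0.
Proof. by case=> D1 D2; split; apply/set0Pn; exists x; rewrite ?D1 ?set11. Qed.

End Scores.

Lemma head_filter_iota (P : pred nat) d a l (k := head d [seq m <- iota a l | P m]) :
  (forall m, a <= m < k -> m < a + l -> ~~ P m) /\ (a <= k < a + l /\ P k \/ k = d).
Proof.
rewrite {}/k; elim: l a => [|l IHl] a /=; first by split=> [m|]; [lia | right].
have [Pa|nPa] /= := boolP (P a); first by split=> [m|]; [lia | left; split; [lia|]].
have [IH1 IH2] := IHl a.+1; split=> [m|].
  by have [->|ma] := eqVneq m a; last by move=> ??; apply: IH1; lia.
by case: IH2 => [[? ?]|->]; [left; split; [lia|] | right].
Qed.

Lemma half_bounds h : h./2 + h./2 <= h <= (h./2 + h./2).+1.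
Proof. rewrite -divn2; lia. Qed.

Section MuOf.
Variables (h n : nat) (c : 'I_n -> 'I_n -> nat).
Hypothesis h_gt0 : 0 < h.

Lemma mu_of_bounds : h./2 < mu_of h c <= h.
Proof.
have [_ +] := head_filter_iota [pred m | undominated c m != set0] h h./2.+1 (h - h./2).
by rewrite -/(mu_of h c); have := half_bounds h; lia.
Qed.

Lemma undominated_below_mu m : h./2 < m < mu_of h c -> undominated c m = set0.
Proof.
have [+ _] := head_filter_iota [pred m | undominated c m != set0] h h./2.+1 (h - h./2).
rewrite -/(mu_of h c) => min hm; have := mu_of_bounds; have := half_bounds h.
by move=> ? ?; apply/eqP/negbNE/min; lia.
Qed.

Lemma mu_ofE m : h./2 < m <= h -> undominated c m != set0 ->
  (forall m', h./2 < m' < m -> undominated c m' = set0) -> mu_of h c = m.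
Proof.
move=> hm Dm Dbelow.
have [+ +] := head_filter_iota [pred m | undominated c m != set0] h h./2.+1 (h - h./2).
rewrite -/(mu_of h c) /= => min; have := mu_of_bounds; have := half_bounds h.
case: (ltngtP (mu_of h c) m) => // [lt_mu | gt_mu] half bounds.
- case=> [[_ /negP[]] | mu_h]; last lia.
  by rewrite Dbelow ?eqxx //; lia.
- by move=> _; move/negP: (min m ltac:(lia) ltac:(lia)).
Qed.

End MuOf.

Lemma sum_bool_full h (b : 'I_h -> bool) i : h <= \sum_(j < h) b j -> b i.
Proof.
rewrite (bigD1 i) //=; apply: contraLR => /negbTE-> /=; rewrite -ltnNge add0n.
apply: (@leq_ltn_trans h.-1); last by rewrite ltn_predL (leq_ltn_trans _ (ltn_ord i)).
rewrite -[h in h.-1]card_ord -(cardC1 i) -sum1_card.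
by apply: leq_sum => j _; apply: leq_b1.
Qed.

Lemma linear_order_top n (r : rel 'I_n) : linear_order r -> 0 < n -> exists t, forall y, r t y.
Proof.
case=> refl _ trans tot n_gt0; case E: (sort r (enum 'I_n)) => [|t s].
  by move: (mem_enum predT (Ordinal n_gt0)); rewrite -(mem_sort r) E.
exists t => y; have : y \in t :: s by rewrite -E mem_sort mem_enum.
rewrite inE => /predU1P[-> // | ys].
by have := sort_sorted tot (enum 'I_n); rewrite E => /(order_path_min trans)/allP; apply.
Qed.

Lemma above_compl n (r : rel 'I_n) y x : linear_order r -> y != x ->
  above r y x + above r x y = 1.
Proof.
case=> _ anti _ tot yx; rewrite /above yx eq_sym yx /=.
have := tot x y; have := anti x y; case: (r x y); case: (r y x) => //= /(_ isT) xy.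
by move: yx; rewrite xy eqxx.
Qed.

Lemma above_cycle3 n (r : rel 'I_n) a b d : linear_order r ->
  above r a b + above r b d + above r d a <= 2.
Proof.
case=> _ anti trans _.
suff : ~~ [&& above r a b, above r b d & above r d a] by do 3!case: above.
apply/and3P => -[/andP[_ rab] /andP[_ rbd] /andP[da rda]].
by move: da; rewrite (anti d a) ?rda ?(trans _ _ _ rab rbd) ?eqxx.
Qed.

Definition pref h n (p : profile h n) (y x : 'I_n) : nat := \sum_(i < h) above (p i) y x.

Lemma Dmu_pref h n (p : profile h n) m : Dmu m p = undominated (pref p) m.
Proof.
apply/setP=> x; rewrite !inE; apply: eq_forallb => y.
rewrite -sum1_card big_mkcond /=; congr (_ < m); apply: eq_bigr => i _.
by rewrite inE; case: above.
Qed.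

Lemma mu_pref h n (p : profile h n) : mu p = mu_of h (pref p).
Proof. by rewrite /mu /mu_of; under eq_filter => m do rewrite Dmu_pref. Qed.

Section ProfileScores.
Variables (h n : nat) (p : profile h n).

Lemma pref_rev : pref (prof_rev p) =2 transpose (pref p).
Proof. by move=> y x; apply: eq_bigr => i _; rewrite /above /prof_rev eq_sym. Qed.

Lemma winner_prefE x :
  Dmu (mu p) p = [set x] /\ x \in Dmu (mu (prof_rev p)) (prof_rev p) <->
  winner h (pref p) x.
Proof.
by rewrite /winner !mu_pref !Dmu_pref (eq_mu_of _ pref_rev) (eq_undominated _ pref_rev).
Qed.

Lemma pref_diag x : pref p x x = 0.
Proof. by apply: big1 => i _; rewrite /above eqxx. Qed.

Hypothesis p_linear : forall i, linear_order (p i).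

Lemma pref_compl y x : y != x -> pref p y x + pref p x y = h.
Proof.
move=> yx; rewrite -big_split -[h in _ = h]card_ord -sum1_card /=.
by apply: eq_bigr => i _; apply: above_compl.
Qed.

Lemma pref_cycle3 a b d : pref p a b + pref p b d + pref p d a <= 2 * h.
Proof.
rewrite -!big_split /= -[h in 2 * h]card_ord -sum1_card big_distrr /=.
by apply: leq_sum => i _; rewrite muln1; apply: above_cycle3.
Qed.

End ProfileScores.

Lemma short_cycle (T : finType) (R : rel T) (V : {set T}) :
  irreflexive R -> #|V| <= 3 -> V != set0 ->
  {in V, forall z, exists2 y, y \in V & R y z} ->
  (exists a b, R a b && R b a) \/
  #|V| = 3 /\ exists a b d, [&& R a b, R b d & R d a].
Proof.
move=> irr V_le3 /set0Pn[a Va] pred.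
have neq y z : R y z -> y != z by apply: contraTneq => ->; rewrite irr.
have [b Vb Rba] := pred a Va; have [d Vd Rdb] := pred b Vb; have [e Ve Red] := pred d Vd.
have [da | da] := eqVneq d a; first by left; exists b, a; rewrite Rba -da Rdb.
have [eb | eb] := eqVneq e b; first by left; exists b, d; rewrite Rdb -eb Red.
have uniq_abd : uniq [:: a; b; d].
  by rewrite /= !inE negb_or eq_sym (neq _ _ Rba) eq_sym da eq_sym (neq _ _ Rdb).
have card_ge s : uniq s -> all (mem V) s -> size s <= #|V|.
  move=> uniq_s /allP sV; rewrite cardE.
  by apply: uniq_leq_size uniq_s _ => z /sV; rewrite mem_enum.
have card3 : #|V| = 3.
  by apply/eqP; rewrite eqn_leq V_le3 (card_ge [:: a; b; d]) //= Va Vb Vd.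
right; split=> //; exists a, d, b; rewrite Rdb Rba andbT.
have [<- | ea] := eqVneq e a; first by rewrite Red.
suff : 4 <= #|V| by rewrite card3.
apply: (card_ge [:: e; a; b; d]); last by rewrite /= Ve Va Vb Vd.
by rewrite cons_uniq uniq_abd !inE (negbTE ea) (negbTE eb) (negbTE (neq _ _ Red)).
Qed.

Section WinnerBeats.
Variables (h n : nat) (c : 'I_n -> 'I_n -> nat) (x : 'I_n).
Hypotheses (h_gt0 : 0 < h) (win : winner h c x).
Hypothesis c_diag : forall z, c z z = 0.
Hypothesis c_compl : forall y z, y != z -> c y z + c z y = h.

Definition beats y z := mu_of h c <= c y z.

Lemma winner_unbeaten y : ~~ beats y x.
Proof. by rewrite -ltnNge; apply/undominatedP: y; rewrite win.1 set11. Qed.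

Lemma beaten_of_neq_winner z : z != x -> exists y, beats y z.
Proof. by move=> zx; apply: dominatedP; rewrite win.1 in_set1. Qed.

Lemma beats_everywhere_of_winner_beats :
  (exists z, beats x z) -> forall y, exists z, beats y z.
Proof.
case=> z xz y; have := mu_of_bounds c h_gt0; have := mu_of_bounds (transpose c) h_gt0.
have lt_mu2 : c x z < mu_of h (transpose c) := undominatedP _ _ _ win.2 z.
rewrite /beats in xz * => b2 b1.
have [|z' le_z'] := @dominatedP _ (transpose c) (mu_of h (transpose c)).-1 y.
  by rewrite (@undominated_below_mu h n (transpose c) h_gt0) ?inE //; lia.
have le_yz' : (mu_of h (transpose c)).-1 <= c y z' := le_z'.
by exists z'; lia.
Qed.

Lemma beats_irrefl : irreflexive beats.
Proof.
move=> z; apply/negbTE; rewrite /beats c_diag -ltnNge.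
by have := mu_of_bounds c h_gt0; lia.
Qed.

Lemma beats_asym y z : beats y z -> ~~ beats z y.
Proof.
have [-> | yz] := eqVneq y z; first by rewrite beats_irrefl.
have := c_compl yz; have := half_bounds h; have := mu_of_bounds c h_gt0; rewrite /beats; lia.
Qed.

Lemma winner_beats_cycle3 : 1 < n <= 4 ->
  n = 4 /\ exists a b d, [&& beats a b, beats b d & beats d a].
Proof.
move=> n_bd; set V := [set~ x].
have cardV : #|V| = n.-1 by rewrite cardsC1 card_ord.
have V_le3 : #|V| <= 3 by rewrite cardV; lia.
have V_gt0 : V != set0 by rewrite -card_gt0 cardV; lia.
have inV y : (y \in V) = (y != x) by rewrite !inE.
have no_2cycle a b : ~~ (beats a b && beats b a).
  by apply/andP => -[ab]; apply/negP/beats_asym.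
have [/existsP x_beats | x_beats_none] := boolP [exists z, beats x z].
- have succ_in_V : {in V, forall z, exists2 y, y \in V & beats z y}.
    move=> z _; have [y zy] := beats_everywhere_of_winner_beats x_beats z.
    by exists y => //; rewrite inV; apply: contraTneq zy => ->; apply: winner_unbeaten.
  have [[a [b ab]] | [card3 [a [b [d /and3P[ba db ad]]]]]] :=
    @short_cycle _ (fun a b => beats b a) V beats_irrefl V_le3 V_gt0 succ_in_V.
  + by move: ab; rewrite andbC (negbTE (no_2cycle _ _)).
  + by split; [lia | exists a, d, b; rewrite ad db ba].
- have pred_in_V : {in V, forall z, exists2 y, y \in V & beats y z}.
    move=> z; rewrite inV => /beaten_of_neq_winner[y yz]; exists y => //.
    by rewrite inV; apply: contraNneq x_beats_none => <-; apply/existsP; exists z.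
  have [[a [b ab]] | [card3 cyc]] := short_cycle beats_irrefl V_le3 V_gt0 pred_in_V.
  + by move: ab; rewrite (negbTE (no_2cycle _ _)).
  + by split; [lia | exact: cyc].
Qed.

End WinnerBeats.

Lemma exists_neq n (x : 'I_n) : 1 < n -> exists y, y != x.
Proof.
move=> n_gt1; have /set0Pn[y] : [set~ x] != set0 by rewrite -card_gt0 cardsC1 card_ord; lia.
by rewrite !inE; exists y.
Qed.

Lemma winner_mu_lt h n (p : profile h n) x : (forall i, linear_order (p i)) ->
  1 < n -> 0 < h -> winner h (pref p) x -> mu_of h (pref p) < h.
Proof.
move=> lin n_gt1 h_gt0 win; rewrite ltn_neqAle; have /andP[_ ->] := mu_of_bounds (pref p) h_gt0.
rewrite andbT; apply/eqP => mu_h.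
have x_top i y : p i x y.
  have [_ anti _ _] := lin i; have [t t_top] := linear_order_top (lin i) (ltnW n_gt1).
  have [<- // | tx] := eqVneq t x.
  have [z] := beaten_of_neq_winner win tx; rewrite /beats mu_h => /(sum_bool_full i)/andP[zt pzt].
  by move: zt; rewrite (anti z t) ?pzt ?t_top ?eqxx.
have [y yx] := exists_neq x n_gt1.
have pref_yx : pref p y x = 0.
  apply: big1 => i _; apply/eqP; rewrite eqb0 /above yx /=; apply/negP => pyx.
  by have [_ anti _ _] := lin i; move: yx; rewrite (anti y x) ?pyx ?x_top ?eqxx.
have : pref p x y < mu_of h (transpose (pref p)) := undominatedP _ _ _ win.2 y.
have := pref_compl lin yx; have := mu_of_bounds (transpose (pref p)) h_gt0; lia.
Qed.

Lemma winner_forbidden h n (p : profile h n) x : (forall i, linear_order (p i)) ->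
  2 <= n -> 2 <= h -> winner h (pref p) x -> ~ (h = 2 \/ n <= 3 \/ (h = 4 /\ n = 4)).
Proof.
move=> lin n_ge2 h_ge2 win; have h_gt0 : 0 < h by lia.
have bounds := mu_of_bounds (pref p) h_gt0.
case=> [h2 | small].
  by have := winner_mu_lt lin n_ge2 h_gt0 win; subst h; lia.
have n_bd : 1 < n <= 4 by lia.
have [n4 [a [b [d /and3P[ab bd da]]]]] :=
  winner_beats_cycle3 h_gt0 win (pref_diag p) (pref_compl lin) n_bd.
case: small => [| [h4 _]]; first lia.
by have := pref_cycle3 lin a b d; rewrite /beats in ab bd da bounds; subst h; lia.
Qed.

Lemma forall_ord_recl n (P : pred 'I_n.+1) :
  [forall y, P y] = P ord0 && [forall y, P (lift ord0 y)].
Proof.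
apply/forallP/andP => [Py | [P0 /forallP Plift] y]; first by split=> //; apply/forallP.
by case: (unliftP ord0 y) => [b ->|->].
Qed.

Lemma winner_of_levels h n (c : 'I_n -> 'I_n -> nat) x m1 m2 : 0 < h ->
  h./2 < m1 <= h -> h./2 < m2 <= h ->
  (forall m, h./2 < m < m1 -> undominated c m = set0) ->
  (forall m, h./2 < m < m2 -> undominated (transpose c) m = set0) ->
  undominated c m1 = [set x] -> x \in undominated (transpose c) m2 -> winner h c x.
Proof.
move=> h_gt0 m1_bd m2_bd below1 below2 D1 D2.
have ne1 : undominated c m1 != set0 by rewrite D1; apply/set0Pn; exists x; rewrite set11.
have ne2 : undominated (transpose c) m2 != set0 by apply/set0Pn; exists x.
by rewrite /winner (mu_ofE h_gt0 m1_bd ne1 below1) (mu_ofE h_gt0 m2_bd ne2 below2).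
Qed.

Section ShiftScores.
Variables (n : nat) (c c' : 'I_n -> 'I_n -> nat).
Hypothesis c_diag : forall z, c z z = 0.
Hypothesis c'E : forall y z, c' y z = c y z + (y != z).

Lemma undominated_shift m : 0 < m -> undominated c' m.+1 = undominated c m.
Proof.
move=> m_gt0; apply/setP=> x; rewrite !inE; apply: eq_forallb => y.
by rewrite c'E; case: (eqVneq y x) => [->|_]; rewrite ?c_diag /=; lia.
Qed.

Lemma mu_of_shift h : 0 < h -> undominated c (mu_of h c) != set0 ->
  mu_of h.+2 c' = (mu_of h c).+1.
Proof.
move=> h_gt0 ne; have bounds := mu_of_bounds c h_gt0.
apply: mu_ofE => //=; first lia.
  by rewrite undominated_shift //; lia.
move=> [|m] m_bd; first lia.
rewrite undominated_shift; last lia.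
by apply: (@undominated_below_mu h n c h_gt0); lia.
Qed.

End ShiftScores.

Lemma winner_shift h n (c c' : 'I_n -> 'I_n -> nat) x : 0 < h ->
  (forall z, c z z = 0) -> (forall y z, c' y z = c y z + (y != z)) ->
  winner h c x -> winner h.+2 c' x.
Proof.
move=> h_gt0 c_diag c'E win; have [ne1 ne2] := winner_nonempty win; case: win => D1 D2.
have c'E_tr y z : transpose c' y z = transpose c y z + (y != z).
  by rewrite /transpose c'E eq_sym.
have b1 := mu_of_bounds c h_gt0; have b2 := mu_of_bounds (transpose c) h_gt0.
split.
- by rewrite (mu_of_shift c_diag c'E h_gt0 ne1) (undominated_shift c_diag c'E) //; lia.
- by rewrite (mu_of_shift c_diag c'E_tr h_gt0 ne2) (undominated_shift c_diag c'E_tr) //; lia.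
Qed.

Section CloneScores.
Variables (h n : nat) (c : 'I_n -> 'I_n -> nat) (c' : 'I_n.+1 -> 'I_n.+1 -> nat) (y0 : 'I_n).
Hypothesis h_gt0 : 0 < h.
Hypothesis c_diag : forall z, c z z = 0.
Hypothesis c'_lift : forall a b, c' (lift ord0 a) (lift ord0 b) = c a b.
Hypothesis c'_row : forall b, c' ord0 (lift ord0 b) = c y0 b.
Hypothesis c'_col : forall a, c' (lift ord0 a) ord0 = c a y0 + (a == y0) * h.
Hypothesis c'_diag : c' ord0 ord0 = 0.

Lemma undominated_clone_lift m a :
  (lift ord0 a \in undominated c' m) = (a \in undominated c m).
Proof.
rewrite !inE forall_ord_recl c'_row; under eq_forallb => b do rewrite c'_lift.
by case: (boolP [forall b, c b a < m]) => [/forallP-> | _]; rewrite ?andbF.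
Qed.

Lemma clone_dominated m : m <= h -> ord0 \notin undominated c' m.
Proof.
move=> m_le; rewrite inE forall_ord_recl; apply/negP => /andP[_ /forallP/(_ y0)].
by rewrite c'_col c_diag eqxx mul1n; lia.
Qed.

Lemma undominated_tr_clone_lift m a : m <= h ->
  (lift ord0 a \in undominated (transpose c') m) =
  (a != y0) && (a \in undominated (transpose c) m).
Proof.
move=> m_le; rewrite !inE forall_ord_recl /transpose c'_col.
under eq_forallb => b do rewrite c'_lift.
have [-> | ay] /= := eqVneq a y0; first by rewrite c_diag mul1n add0n ltnNge m_le.
rewrite mul0n addn0; case: (boolP [forall b, c a b < m]) => [/forallP-> | _]; last by rewrite andbF.
by rewrite andbT.
Qed.

Lemma undominated_tr_clone m : 0 < m ->
  (ord0 \in undominated (transpose c') m) = (y0 \in undominated (transpose c) m).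
Proof.
move=> m_gt0; rewrite !inE forall_ord_recl /transpose c'_diag m_gt0 /=.
by apply: eq_forallb => b; rewrite c'_row.
Qed.

Lemma clone_nonempty m : m <= h -> (undominated c' m != set0) = (undominated c m != set0).
Proof.
move=> m_le; apply/set0Pn/set0Pn => [[z] | [a Da]].
  case: (unliftP ord0 z) => [a -> | ->]; last by rewrite (negbTE (clone_dominated m_le)).
  by rewrite undominated_clone_lift; exists a.
by exists (lift ord0 a); rewrite undominated_clone_lift.
Qed.

Lemma clone_tr_nonempty m : 0 < m <= h ->
  (undominated (transpose c') m != set0) = (undominated (transpose c) m != set0).
Proof.
case/andP=> m_gt0 m_le; apply/set0Pn/set0Pn => [[z] | [a Da]].
  case: (unliftP ord0 z) => [a -> | ->].
    by rewrite undominated_tr_clone_lift // => /andP[_ Da]; exists a.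
  by rewrite undominated_tr_clone //; exists y0.
have [ay | ay] := eqVneq a y0.
  by exists ord0; rewrite undominated_tr_clone // -ay.
by exists (lift ord0 a); rewrite undominated_tr_clone_lift // ay.
Qed.

Lemma mu_of_clone (d : 'I_n -> 'I_n -> nat) (d' : 'I_n.+1 -> 'I_n.+1 -> nat) :
  (forall m, 0 < m <= h -> (undominated d' m != set0) = (undominated d m != set0)) ->
  undominated d (mu_of h d) != set0 -> mu_of h d' = mu_of h d.
Proof.
move=> ne_eq ne; have bounds := mu_of_bounds d h_gt0.
apply: mu_ofE => //; first by rewrite ne_eq //; lia.
move=> m m_bd; apply/eqP; rewrite -[_ == _]negbK ne_eq; last lia.
by rewrite (@undominated_below_mu h n d h_gt0) ?eqxx.
Qed.

Lemma winner_clone x : y0 != x -> winner h c x -> winner h c' (lift ord0 x).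
Proof.
move=> y0x win; have [ne1 ne2] := winner_nonempty win; case: win => D1 D2.
have mu1 : mu_of h c' = mu_of h c.
  by apply: mu_of_clone => // m /andP[_ m_le]; apply: clone_nonempty.
have mu2 : mu_of h (transpose c') = mu_of h (transpose c).
  by apply: mu_of_clone => // m; apply: clone_tr_nonempty.
have b1 := mu_of_bounds c h_gt0; have b2 := mu_of_bounds (transpose c) h_gt0.
split.
- rewrite mu1; apply/setP => z; rewrite in_set1.
  case: (unliftP ord0 z) => [a -> | ->].
    by rewrite undominated_clone_lift D1 in_set1 (inj_eq (@lift_inj _ ord0)).
  by rewrite (negbTE (clone_dominated _)) ?(negbTE (neq_lift _ _)) //; lia.
- by rewrite mu2 undominated_tr_clone_lift; [rewrite eq_sym y0x | lia].
Qed.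

End CloneScores.

Definition rank_profile h n (F : nat -> 'I_n -> nat) : profile h n :=
  fun i a b => F i b <= F i a.
Arguments rank_profile h {n}.

Lemma rank_profile_linear h n (F : nat -> 'I_n -> nat) (i : 'I_h) :
  injective (F i) -> linear_order (rank_profile h F i).
Proof.
move=> F_inj; split=> [a | a b | b a d | a b]; rewrite /rank_profile.
- exact: leqnn.
- by move=> le_ab; apply: F_inj; apply/eqP; rewrite eqn_leq andbC.
- by move=> ab bd; apply: leq_trans bd ab.
- exact: leq_total.
Qed.

Definition realizable h n := exists (F : nat -> 'I_n -> nat) (x : 'I_n),
  (forall i, i < h -> injective (F i)) /\ winner h (pref (rank_profile h F)) x.

(* Voters 0 and 1 hold opposite orders, so together they rank y above z exactly once. *)
Definition add_reversed_pair n (F : nat -> 'I_n -> nat) : nat -> 'I_n -> nat :=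
  fun i => if i is k.+2 then F k else if i is 0 then @nat_of_ord n else fun a => n - a.

Lemma pref_add_reversed_pair h n (F : nat -> 'I_n -> nat) y z :
  pref (rank_profile h.+2 (add_reversed_pair F)) y z = pref (rank_profile h F) y z + (y != z).
Proof.
rewrite /pref !big_ord_recl addnA addnC; congr (_ + _).
rewrite /rank_profile /above /=; have [// | ] := eqVneq y z.
rewrite -val_eqE /=; have := ltn_ord y; have := ltn_ord z.
by case: (leqP z y); case: (leqP (n - z) (n - y)) => //=; lia.
Qed.

Lemma realizable_add_pair h n : 0 < h -> realizable h n -> realizable h.+2 n.
Proof.
move=> h_gt0 [F [x [F_inj win]]]; exists (add_reversed_pair F), x; split.
  case=> [|[|i]] /= lt_i; [exact: val_inj | | exact: F_inj].
  by move=> a b sub_eq; apply: ord_inj; have := ltn_ord a; have := ltn_ord b; lia.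
apply: (winner_shift h_gt0 (pref_diag _) _ win).
exact: pref_add_reversed_pair.
Qed.

(* Doubling the ranks leaves room for a clone of y0 immediately below y0. *)
Definition clone_below n (F : nat -> 'I_n -> nat) (y0 : 'I_n) : nat -> 'I_n.+1 -> nat :=
  fun i a => if unlift ord0 a is Some a' then 2 * F i a' + 1 else 2 * F i y0.

Section CloneBelow.
Variables (h n : nat) (F : nat -> 'I_n -> nat) (y0 : 'I_n).
Hypothesis F_inj : forall i, i < h -> injective (F i).
Local Notation F' := (clone_below F y0).

Lemma clone_below_inj i : i < h -> injective (F' i).
Proof.
move=> lt_i a b; rewrite /clone_below.
case: (unliftP ord0 a) => [a' ->|->]; case: (unliftP ord0 b) => [b' ->|->] //; try lia.
by move=> E; congr lift; apply: (F_inj lt_i); lia.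
Qed.

Let neq_rank (i : 'I_h) a b : a != b -> F i a != F i b.
Proof. by apply: contraNneq => /(F_inj (ltn_ord i)) ->. Qed.

Lemma above_clone_lift (i : 'I_h) (a b : 'I_n) :
  above (rank_profile h F' i) (lift ord0 a) (lift ord0 b) = above (rank_profile h F i) a b.
Proof.
rewrite /above /rank_profile /clone_below !liftK (inj_eq (@lift_inj _ ord0)).
by congr (_ && _); apply/idP/idP; lia.
Qed.

Lemma above_clone_row (i : 'I_h) (b : 'I_n) :
  above (rank_profile h F' i) ord0 (lift ord0 b) = above (rank_profile h F i) y0 b.
Proof.
rewrite /above /rank_profile /clone_below liftK unlift_none neq_lift /=.
have [<- | y0b] /= := eqVneq y0 b; first lia.
by move/eqP: (neq_rank i y0b); lia.
Qed.

Lemma above_clone_col (i : 'I_h) (a : 'I_n) :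
  above (rank_profile h F' i) (lift ord0 a) ord0 =
  above (rank_profile h F i) a y0 + (a == y0) :> nat.
Proof.
rewrite /above /rank_profile /clone_below liftK unlift_none eq_sym neq_lift /=.
have [-> | ay0] /= := eqVneq a y0; first lia.
by move/eqP: (neq_rank i ay0); lia.
Qed.

Lemma winner_clone_below x : 0 < h -> y0 != x -> winner h (pref (rank_profile h F)) x ->
  winner h (pref (rank_profile h F')) (lift ord0 x).
Proof.
move=> h_gt0 y0x win.
apply: (winner_clone h_gt0 (pref_diag _) _ _ _ (pref_diag _ _) y0x win).
- by move=> a b; apply: eq_bigr => i _; rewrite above_clone_lift.
- by move=> b; apply: eq_bigr => i _; rewrite above_clone_row.
- move=> a; rewrite /pref -[h in _ * h]card_ord -sum1_card big_distrr -big_split /=.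
  by apply: eq_bigr => i _; rewrite above_clone_col muln1.
Qed.

End CloneBelow.

Lemma realizable_succ_n h n : 0 < h -> 1 < n -> realizable h n -> realizable h n.+1.
Proof.
move=> h_gt0 n_gt1 [F [x [F_inj win]]]; have [y0 y0x] := exists_neq x n_gt1.
exists (clone_below F y0), (lift ord0 x); split; first exact: clone_below_inj.
exact: winner_clone_below.
Qed.

Definition table n (T : seq (seq nat)) : nat -> 'I_n -> nat :=
  fun i a => nth 0 (nth [::] T i) a.
Arguments table : clear implicits.

Lemma table_inj n (T : seq (seq nat)) i :
  all (fun r => (size r == n) && uniq r) T -> i < size T -> injective (table n T i).
Proof.
move=> /allP rows lt_i a b; have /andP[/eqP row_n row_uniq] := rows _ (mem_nth [::] lt_i).
by move/eqP; rewrite /table nth_uniq ?row_n // => /eqP; apply: ord_inj.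
Qed.

Lemma forall_ord0 (P : pred 'I_0) : [forall y, P y].
Proof. by apply/forallP => -[]. Qed.

Lemma realizable_of_table h n (T : seq (seq nat)) (x : 'I_n)
    (c := pref (rank_profile h (table n T))) :
  size T = h -> all (fun r => (size r == n) && uniq r) T -> h./2.+2 <= h ->
  [forall z, [forall y, c y z < h./2.+1] == (z == x)] ->
  [forall z, ~~ [forall y, c z y < h./2.+1]] ->
  [forall y, c x y < h./2.+2] -> realizable h n.
Proof.
move=> size_T rows m2_le /forallP D1 /forallP D2 D3; exists (table n T), x; split.
  by move=> i lt_i; apply: table_inj; rewrite ?size_T.
have h_gt0 : 0 < h by lia.
apply: (winner_of_levels (m1 := h./2.+1) (m2 := h./2.+2)) => //; try lia.
- move=> m m_bd; have -> : m = h./2.+1 by lia.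
  by apply/setP => z; rewrite inE in_set0; apply/negbTE; exact: D2.
- by apply/setP => z; rewrite !inE; move/eqP: (D1 z).
- by rewrite inE.
Qed.

(* Unlike the big sum, this form of the scores evaluates under vm_compute. *)
Lemma pref_rank_profile h n (F : nat -> 'I_n -> nat) y z :
  pref (rank_profile h F) y z =
  sumn [seq nat_of_bool ((y != z) && (F i z <= F i y)) | i <- iota 0 h].
Proof.
have -> : iota 0 h = index_iota 0 h by rewrite /index_iota subn0.
rewrite sumnE big_map.
by rewrite (big_mkord xpredT (fun i => nat_of_bool ((y != z) && (F i z <= F i y)))).
Qed.

Ltac decide_table :=
  rewrite ?inE !forall_ord_recl ?forall_ord0 /transpose !pref_rank_profile;
  vm_compute; reflexivity.

Lemma realizable_3_4 : realizable 3 4.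
Proof.
apply: (@realizable_of_table 3 4
  [:: [:: 3; 2; 1; 0]; [:: 3; 0; 2; 1]; [:: 0; 2; 1; 3]] ord0) => //;
  decide_table.
Qed.

Lemma realizable_4_5 : realizable 4 5.
Proof.
apply: (@realizable_of_table 4 5
  [:: [:: 4; 3; 2; 1; 0]; [:: 4; 0; 3; 2; 1]; [:: 4; 1; 0; 3; 2]; [:: 0; 3; 2; 1; 4]] ord0) => //;
  decide_table.
Qed.

Lemma realizable_6_4 : realizable 6 4.
Proof.
apply: (@realizable_of_table 6 4
  [:: [:: 3; 2; 1; 0]; [:: 3; 2; 1; 0]; [:: 3; 0; 2; 1]; [:: 3; 0; 2; 1];
      [:: 0; 2; 1; 3]; [:: 0; 2; 1; 3]] ord0) => //;
  decide_table.
Qed.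

Lemma realizable_widen h n0 n : 0 < h -> 1 < n0 <= n -> realizable h n0 -> realizable h n.
Proof.
move=> h_gt0 /andP[n0_gt1 le_n0n] base; rewrite -(subnKC le_n0n).
elim: (n - n0) => [|k IHk]; first by rewrite addn0.
by rewrite addnS; apply: realizable_succ_n => //; lia.
Qed.

Lemma realizable_add_pairs h n k : 0 < h -> realizable h n -> realizable (h + 2 * k) n.
Proof.
move=> h_gt0 base; elim: k => [|k IHk]; first by rewrite addn0.
by rewrite mulnS addnCA add2n; apply: realizable_add_pair => //; lia.
Qed.

Lemma realizable_allowed h n : 3 <= h -> 4 <= n -> ~ (h = 4 /\ n = 4) -> realizable h n.
Proof.
move=> h_ge3 n_ge4 not44; have := odd_double_half h; rewrite -mul2n.
have [odd_h | even_h] := boolP (odd h) => /= h_eq.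
  have -> : h = 3 + 2 * (h./2 - 1) by lia.
  by apply/realizable_add_pairs/(realizable_widen _ _ realizable_3_4); lia.
have [h4 | h_ge6] : h = 4 \/ 6 <= h by lia.
  by subst h; apply: (realizable_widen _ _ realizable_4_5); lia.
have -> : h = 6 + 2 * (h./2 - 3) by lia.
by apply/realizable_add_pairs/(realizable_widen _ _ realizable_6_4); lia.
Qed.

Theorem proposition4 (n h : nat) (hn : 2 <= n) (hh : 2 <= h) :
  (exists (p : profile h n) (x : 'I_n),
      (forall i, linear_order (p i)) /\
      Dmu (mu p) p = [set x] /\
      x \in Dmu (mu (prof_rev p)) (prof_rev p))
  <-> ~ (h = 2 \/ n <= 3 \/ (h = 4 /\ n = 4)).
Proof.
split=> [[p [x [lin /winner_prefE win]]] | allowed].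
  exact: winner_forbidden lin hn hh win.
have [F [x [F_inj win]]] : realizable h n by apply: realizable_allowed; lia.
exists (rank_profile h F), x; split; last exact/winner_prefE.
by move=> i; apply/rank_profile_linear/F_inj.
Qed.
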